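(* The set of natural numbers that occur exactly twice in $(a(n))_{n\ge 0}$ equals the set of natural numbers that are not of the form $\lfloor \varphi k+\tfrac12\rfloor$ for any integer $k\ge 0$ (i.e., the complement in $\mathbb{N}$ of $\{\lfloor \varphi k+\tfrac12\rfloor : k\ge 0\}$).
   Context: $\mathbb{N}=\{0,1,2,\ldots\}$, $\varphi=(1+\sqrt5)/2$. Let $(F_n)_{n\ge 0}$ be the Fibonacci numbers: $F_0=0$, $F_1=1$, $F_n=F_{n-1}+F_{n-2}$ for $n\ge 2$. Define $(a(n))_{n\ge 0}$ (OEIS A105774) by $a(0)=0$, $a(1)=1$, and for $n\ge 2$, $a(n)=F_{j+1}-a(n-F_j)$, where $j\ge 2$ is the unique index with $F_j<n\le F_{j+1}$. *)

From Stdlib Require Import Reals ZArith Arith Lia.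

Fixpoint fib (n : nat) : nat :=
  match n with
  | 0 => 0
  | S m => match m with
           | 0 => 1
           | S k => fib m + fib k
           end
  end.

Fixpoint jidx_aux (fuel j n : nat) : nat :=
  match fuel with
  | 0 => j
  | S f => if Nat.leb n (fib (S j)) then j else jidx_aux f (S j) n
  end.

Definition jidx (n : nat) : nat := jidx_aux n 2 n.

(* The recursion a(n) = F_{j+1} - a(n - F_j), with fuel (n - F_j < n since F_j >= 1).
   Values taken in Z so that the subtraction is the genuine integer one. *)
Fixpoint a_aux (fuel n : nat) : Z :=
  match fuel with
  | 0 => 0%Z
  | S f =>
      match n with
      | 0 => 0%Z
      | 1 => 1%Z
      | _ => let j := jidx n in
             (Z.of_nat (fib (S j)) - a_aux f (n - fib j))%Z
      end
  end.

(* OEIS A105774. *)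
Definition a (n : nat) : Z := a_aux n n.

Definition occurs_exactly_twice (m : nat) : Prop :=
  exists n1 n2 : nat, n1 <> n2 /\ a n1 = Z.of_nat m /\ a n2 = Z.of_nat m /\
    forall n : nat, a n = Z.of_nat m -> n = n1 \/ n = n2.

Definition phi : R := ((1 + sqrt 5) / 2)%R.

Definition is_floor_phi_half (m k : nat) : Prop :=
  (INR m <= phi * INR k + / 2 < INR m + 1)%R.

(* The sequence is self-similar: on the block F_j < n <= F_(j+1) it takes its values in
   [F_j, F_(j+1)) and a(n) = F_(j+1) - a(n - F_j).  Hence for F_j < m < F_(j+1) the value m
   occurs exactly as often as F_(j+1) - m, while F_j itself never occurs once j >= 4.

   The set of values floor(phi k + 1/2) has the same symmetry m |-> F_(j+1) - m on
   [F_j, F_(j+1)), the witness k being mapped to F_j - k.  This works because, among the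
   fractions A/z with z odd, z <= 2 F_(j+1) - 1 and A = z mod 4, the Lucas-Fibonacci
   quotient L_(j+1)/F_(j+1) is much the closest to sqrt 5 on its side: A^2 - 5 z^2 = 4 w with
   either |w| >= 5, which keeps A/z far from sqrt 5, or w = +-1, which forces (A, z) to be a
   Lucas-Fibonacci pair lying on the other side of sqrt 5.  Both sets agree on 0..4, and strong
   induction on m concludes. *)

From Stdlib Require Import Reals ZArith Lia Lra.

Lemma fib_SS n : fib (S (S n)) = fib (S n) + fib n.
Proof. reflexivity. Qed.

Lemma fib_monotone i i' : i <= i' -> fib i <= fib i'.
Proof.
  induction 1 as [|i' _ IH]; [lia|].
  destruct i' as [|i']; [simpl in *; lia|]. rewrite fib_SS. lia.
Qed.

Lemma fib_pos n : 0 < n -> 0 < fib n.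
Proof.
  intros Hn. destruct n as [|[|n]]; [lia|simpl; lia|].
  rewrite fib_SS. pose proof (fib_monotone 1 (S n) ltac:(lia)) as H.
  change (fib 1) with 1 in H. lia.
Qed.

Lemma fib_lt_succ n : 2 <= n -> fib n < fib (S n).
Proof.
  intros Hn. destruct n as [|n]; [lia|]. rewrite fib_SS.
  pose proof (fib_pos n ltac:(lia)). lia.
Qed.

Lemma lt_of_fib_lt i i' : fib i < fib i' -> i < i'.
Proof.
  intros H. destruct (le_lt_dec i' i) as [Hle|]; [|assumption].
  pose proof (fib_monotone _ _ Hle). lia.
Qed.

Lemma fib_interval_unique j j' : fib j < fib (S j') -> fib j' < fib (S j) -> j = j'.
Proof.
  intros H H'. apply lt_of_fib_lt in H. apply lt_of_fib_lt in H'. lia.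
Qed.

Lemma le_fib_succ n : n <= fib (S n).
Proof.
  induction n as [|n IH]; [simpl; lia|]. rewrite fib_SS.
  destruct n; [simpl; lia|]. pose proof (fib_pos (S n) ltac:(lia)). lia.
Qed.

Lemma jidx_aux_spec fuel j n : fib j < n -> n <= fib (S (j + fuel)) ->
  j <= jidx_aux fuel j n /\
  fib (jidx_aux fuel j n) < n <= fib (S (jidx_aux fuel j n)).
Proof.
  revert j. induction fuel as [|fuel IH]; intros j Hlo Hhi; cbn [jidx_aux].
  - rewrite Nat.add_0_r in Hhi. lia.
  - destruct (Nat.leb_spec n (fib (S j))) as [Hle|Hgt]; [lia|].
    rewrite Nat.add_succ_r in Hhi.
    specialize (IH (S j) Hgt ltac:(now rewrite Nat.add_succ_l)). lia.
Qed.

Lemma jidx_spec n : 2 <= n -> 2 <= jidx n /\ fib (jidx n) < n <= fib (S (jidx n)).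
Proof.
  intros Hn. apply jidx_aux_spec; [simpl; lia|].
  pose proof (le_fib_succ (2 + n)). lia.
Qed.

Lemma a_aux_fuel f1 f2 n : n <= f1 -> n <= f2 -> a_aux f1 n = a_aux f2 n.
Proof.
  revert f2 n. induction f1 as [|f1 IH]; intros f2 n H1 H2.
  - replace n with 0 by lia. destruct f2; reflexivity.
  - destruct f2 as [|f2]; [replace n with 0 by lia; reflexivity|].
    destruct n as [|[|n]]; try reflexivity.
    cbn [a_aux]. f_equal. destruct (jidx_spec (S (S n))) as [Hj _]; [lia|].
    pose proof (fib_pos (jidx (S (S n))) ltac:(lia)). apply IH; lia.
Qed.

Lemma a_block_rec n j : 2 <= j -> fib j < n <= fib (S j) ->
  a n = (Z.of_nat (fib (S j)) - a (n - fib j))%Z.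
Proof.
  intros Hj Hn. pose proof (fib_pos j ltac:(lia)).
  destruct (jidx_spec n) as [Hj' Hn']; [lia|].
  assert (E : jidx n = j) by (apply fib_interval_unique; lia).
  destruct n as [|[|n']]; [lia|lia|].
  change (a (S (S n'))) with (Z.of_nat (fib (S (jidx (S (S n')))))
                               - a_aux (S n') (S (S n') - fib (jidx (S (S n')))))%Z.
  rewrite E. f_equal. apply a_aux_fuel; lia.
Qed.

Lemma a_block_bounds n j : 2 <= j -> fib j < n <= fib (S j) ->
  (Z.of_nat (fib j) <= a n < Z.of_nat (fib (S j)))%Z.
Proof.
  revert j. induction n as [n IH] using lt_wf_ind. intros j Hj Hn.
  rewrite (a_block_rec n j Hj Hn).
  destruct j as [|j]; [lia|]. rewrite fib_SS in *.
  pose proof (fib_pos j ltac:(lia)).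
  set (i := n - fib (S j)).
  enough (1 <= a i <= Z.of_nat (fib j))%Z by lia.
  destruct (Nat.eq_dec i 1) as [->|Hi]; [cbn; lia|].
  destruct (jidx_spec i) as [Hji Hbi]; [lia|].
  assert (jidx i < j) by (apply lt_of_fib_lt; lia).
  pose proof (fib_monotone (S (jidx i)) j ltac:(lia)).
  pose proof (fib_pos (jidx i) ltac:(lia)).
  specialize (IH i ltac:(pose proof (fib_pos (S j)); unfold i; lia) (jidx i) Hji Hbi).
  lia.
Qed.

Lemma a_block_of_value n j : 3 <= j ->
  (Z.of_nat (fib j) <= a n < Z.of_nat (fib (S j)))%Z -> fib j < n <= fib (S j).
Proof.
  intros Hj Ha. pose proof (fib_monotone 3 j Hj) as H3. change (fib 3) with 2 in H3.
  assert (Hn : 2 <= n) by (destruct n as [|[|n]]; cbn in Ha; lia).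
  destruct (jidx_spec n Hn) as [Hj' Hb].
  pose proof (a_block_bounds n _ Hj' Hb).
  replace j with (jidx n) by (apply fib_interval_unique; lia). exact Hb.
Qed.

Lemma le_fib_of_a_lt i k : (0 < a i < Z.of_nat (fib k))%Z -> i <= fib k.
Proof.
  intros Ha. destruct (Nat.le_gt_cases i 1) as [Hi|Hi].
  - destruct i as [|[|]]; cbn in Ha; lia.
  - destruct (jidx_spec i) as [Hj Hb]; [lia|].
    pose proof (a_block_bounds i _ Hj Hb).
    assert (jidx i < k) by (apply lt_of_fib_lt; lia).
    pose proof (fib_monotone (S (jidx i)) k ltac:(lia)). lia.
Qed.

Lemma a_eq_iff_shift j m n : fib j < m < fib (S j) ->
  a n = Z.of_nat m <-> fib j < n /\ a (n - fib j) = Z.of_nat (fib (S j) - m).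
Proof.
  intros Hm.
  assert (Hj : 3 <= j).
  { destruct j as [|[|[|j]]]; cbn in Hm; lia. }
  destruct j as [|j]; [lia|]. rewrite fib_SS in Hm.
  pose proof (fib_pos j ltac:(lia)). pose proof (fib_pos (S j) ltac:(lia)).
  split.
  - intros Ha.
    assert (Hb : fib (S j) < n <= fib (S (S j)))
      by (apply a_block_of_value; rewrite ?Ha, ?fib_SS; lia).
    rewrite (a_block_rec n (S j)) in Ha by lia. rewrite fib_SS in *. lia.
  - intros [Hn Ha].
    assert (n - fib (S j) <= fib j) by (apply le_fib_of_a_lt; rewrite Ha, fib_SS; lia).
    rewrite (a_block_rec n (S j)), Ha by (rewrite ?fib_SS; lia). rewrite fib_SS. lia.
Qed.

Lemma a_ne_fib j n : 4 <= j -> a n <> Z.of_nat (fib j).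
Proof.
  intros Hj Ha. destruct j as [|j]; [lia|].
  pose proof (fib_lt_succ (S j) ltac:(lia)).
  assert (Hb : fib (S j) < n <= fib (S (S j))) by (apply a_block_of_value; lia).
  rewrite (a_block_rec n (S j)), fib_SS in Ha by lia.
  assert (Hb' : fib j < n - fib (S j) <= fib (S j)).
  { apply a_block_of_value; [lia|]. pose proof (fib_lt_succ j ltac:(lia)). lia. }
  rewrite fib_SS in Hb. lia.
Qed.

Definition exactly_twice (P : nat -> Prop) : Prop :=
  exists n1 n2, n1 <> n2 /\ P n1 /\ P n2 /\ forall n, P n -> n = n1 \/ n = n2.

Lemma exactly_twice_shift c (P Q : nat -> Prop) :
  (forall n, P n <-> c < n /\ Q (n - c)) -> (forall i, Q i -> 0 < i) ->
  exactly_twice P <-> exactly_twice Q.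
Proof.
  intros HPQ HQ. split.
  - intros (n1 & n2 & Hne & H1 & H2 & Hall).
    apply HPQ in H1 as [? H1]. apply HPQ in H2 as [? H2].
    exists (n1 - c), (n2 - c). repeat split; [lia|assumption|assumption|].
    intros i Hi. pose proof (HQ i Hi).
    assert (HP : P (i + c)) by (apply HPQ; split; [lia|now replace (i + c - c) with i by lia]).
    destruct (Hall _ HP); lia.
  - intros (i1 & i2 & Hne & H1 & H2 & Hall).
    pose proof (HQ i1 H1). pose proof (HQ i2 H2).
    exists (i1 + c), (i2 + c).
    repeat split; [lia| | |].
    + apply HPQ. split; [lia|now replace (i1 + c - c) with i1 by lia].
    + apply HPQ. split; [lia|now replace (i2 + c - c) with i2 by lia].
    + intros n Hn. apply HPQ in Hn as [? Hn]. destruct (Hall _ Hn); lia.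
Qed.

Lemma occurs_exactly_twice_reflect j m : 5 <= j -> fib j <= m < fib (S j) ->
  occurs_exactly_twice m <-> occurs_exactly_twice (fib (S j) - m).
Proof.
  intros Hj Hm. destruct (Nat.eq_dec m (fib j)) as [->|Hne].
  - destruct j as [|j]; [lia|].
    replace (fib (S (S j)) - fib (S j)) with (fib j) by (rewrite fib_SS; lia).
    split; intros (n & _ & _ & Ha & _); exfalso.
    + exact (a_ne_fib (S j) n ltac:(lia) Ha).
    + exact (a_ne_fib j n ltac:(lia) Ha).
  - apply (exactly_twice_shift (fib j)).
    + intros n. apply a_eq_iff_shift. lia.
    + intros [|i] Hi; [change (a 0) with 0%Z in Hi; lia|lia].
Qed.

Lemma a_ge_5 n : 5 < n -> (5 <= a n)%Z.
Proof.
  intros Hn. destruct (jidx_spec n) as [Hj Hb]; [lia|].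
  pose proof (a_block_bounds n _ Hj Hb).
  assert (5 < S (jidx n)) by (apply lt_of_fib_lt; change (fib 5) with 5; lia).
  pose proof (fib_monotone 5 (jidx n) ltac:(lia)) as H5. change (fib 5) with 5 in H5. lia.
Qed.

Lemma occurs_exactly_twice_small m : m < 5 -> occurs_exactly_twice m <-> m = 1 \/ m = 4.
Proof.
  intros Hm.
  assert (Hsmall : forall n, a n = Z.of_nat m -> n <= 5).
  { intros n Ha. destruct (le_lt_dec n 5); [assumption|]. pose proof (a_ge_5 n). lia. }
  assert (Htable : a 0 = 0%Z /\ a 1 = 1%Z /\ a 2 = 1%Z /\ a 3 = 2%Z /\ a 4 = 4%Z /\ a 5 = 4%Z)
    by (repeat split; vm_compute; reflexivity).
  destruct Htable as (A0 & A1 & A2 & A3 & A4 & A5).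
  split.
  - intros (n1 & n2 & Hne & H1 & H2 & _).
    pose proof (Hsmall _ H1). pose proof (Hsmall _ H2).
    destruct n1 as [|[|[|[|[|[|n1]]]]]]; try lia;
      destruct n2 as [|[|[|[|[|[|n2]]]]]]; try lia;
      rewrite ?A0, ?A1, ?A2, ?A3, ?A4, ?A5 in H1, H2; lia.
  - intros [-> | ->]; [exists 1, 2 | exists 4, 5]; (split; [lia|]);
      (split; [rewrite ?A1, ?A2, ?A4, ?A5; reflexivity|]);
      (split; [rewrite ?A1, ?A2, ?A4, ?A5; reflexivity|]);
      intros n Ha; pose proof (Hsmall _ Ha);
      destruct n as [|[|[|[|[|[|n]]]]]]; try lia;
      rewrite ?A0, ?A1, ?A2, ?A3, ?A4, ?A5 in Ha; lia.
Qed.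

Open Scope Z_scope.

Definition fz (n : nat) : Z := Z.of_nat (fib n).

Lemma fz_SS n : fz (S (S n)) = fz (S n) + fz n.
Proof. unfold fz. rewrite fib_SS. lia. Qed.

Definition cassini (n : nat) : Z := fz (S n) * fz (S n) - fz (S n) * fz n - fz n * fz n.

Lemma cassini_S n : cassini (S n) = - cassini n.
Proof. unfold cassini. rewrite fz_SS. ring. Qed.

Lemma cassini_sq n : cassini n * cassini n = 1.
Proof.
  induction n as [|n IH]; [reflexivity|]. rewrite cassini_S. lia.
Qed.

Lemma cassini_converse u v : 0 < u -> 0 <= v ->
  (u*u - u*v - v*v) * (u*u - u*v - v*v) = 1 -> exists n, u = fz (S n) /\ v = fz n.
Proof.
  remember (Z.to_nat u) as N eqn:HN. revert u v HN.
  induction N as [N IH] using lt_wf_ind. intros u v HN Hu Hv Hc.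
  destruct (Z.eq_dec v 0) as [->|Hv0].
  - exists O. cbn. nia.
  - destruct (Z.lt_trichotomy v u) as [Hlt|[->|Hgt]]; [|exists 1%nat; cbn; nia|nia].
    destruct (IH (Z.to_nat v) ltac:(lia) v (u - v) eq_refl ltac:(lia) ltac:(lia))
      as [n [Hvn Hn]].
    { rewrite <- Hc. ring. }
    exists (S n). rewrite fz_SS. lia.
Qed.

Lemma lucas_norm j :
  (2 * fz j + fz (S j)) * (2 * fz j + fz (S j)) - 5 * fz (S j) * fz (S j) = 4 * cassini (S j).
Proof. unfold cassini. rewrite fz_SS. ring. Qed.

Lemma odd_norm_classes z q : Z.Odd z ->
  exists w, (z + 4*q) * (z + 4*q) - 5*z*z = 4*w /\ (w*w = 1 \/ 25 <= w*w).
Proof.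
  intros [t ->]. exists (5*q*q - (2*t+1-q)*(2*t+1-q)). split; [ring|].
  set (r := (2*t+1-q) mod 5). set (c := (2*t+1-q) / 5).
  assert (Hr : 2*t+1-q = 5*c + r) by (apply Z.div_mod; lia).
  assert (0 <= r < 5) by (apply Z.mod_pos_bound; lia).
  rewrite Hr. set (w := 5*q*q - (5*c+r)*(5*c+r)).
  assert (Hw : w = 5*(q*q - 5*c*c - 2*c*r) - r*r) by (unfold w; ring).
  assert (Hodd : exists e, w = 2*e + 1).
  { exists (2*q*q + q*(2*t+1) - 2*t*t - 2*t - 1). unfold w. rewrite <- Hr. ring. }
  destruct Hodd as [e He].
  (* w is odd and w = -r^2 mod 5, which rules out |w| in {0, 2, 3, 4} *)
  assert (w = 1 \/ w = -1 \/ 5 <= w \/ w <= -5)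
    by (assert (r = 0 \/ r = 1 \/ r = 2 \/ r = 3 \/ r = 4) as [-> | [-> | [-> | [-> | ->]]]]
          by lia; lia).
  nia.
Qed.

Lemma fz_index_in_range j n : (5 <= j)%nat ->
  2 * fz j - 1 <= fz n <= 2 * fz (S j) - 1 -> n = (j + 2)%nat.
Proof.
  intros Hj Hn. unfold fz in *.
  destruct j as [|[|j]]; [lia|lia|].
  pose proof (fib_SS j). pose proof (fib_SS (S j)).
  pose proof (fib_SS (S (S j))). pose proof (fib_SS (S (S (S j)))).
  pose proof (fib_monotone 3 j ltac:(lia)) as H3. change (fib 3) with 2%nat in H3.
  assert (S (S (S j)) < n)%nat by (apply lt_of_fib_lt; lia).
  assert (n < S (S (S (S (S j)))))%nat by (apply lt_of_fib_lt; lia).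
  lia.
Qed.

Lemma unit_norm_sign j z q w : (5 <= j)%nat ->
  2 * fz j - 1 <= z <= 2 * fz (S j) - 1 -> 0 < z + 4*q ->
  (z + 4*q) * (z + 4*q) - 5*z*z = 4*w -> w*w = 1 -> w = - cassini (S j).
Proof.
  intros Hj Hz HA Hnorm Hw.
  assert (Hu : (z + 2*q) * (z + 2*q) - (z + 2*q) * z - z*z = w).
  { assert (4 * ((z + 2*q) * (z + 2*q) - (z + 2*q) * z - z*z) = 4*w)
      by (rewrite <- Hnorm; ring).
    lia. }
  assert (0 < fz j) by (unfold fz; pose proof (fib_pos j ltac:(lia)); lia).
  destruct (cassini_converse (z + 2*q) z ltac:(lia) ltac:(lia) ltac:(rewrite Hu; exact Hw))
    as [n [Hun Hzn]].
  pose proof (fz_index_in_range j n Hj ltac:(lia)) as ->.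
  replace (j + 2)%nat with (S (S j)) in * by lia.
  rewrite <- cassini_S. unfold cassini. rewrite <- Hun, <- Hzn. lia.
Qed.

Definition s5 : R := sqrt 5.

Lemma s5_sq : (s5 * s5 = 5)%R.
Proof. apply sqrt_sqrt. lra. Qed.

Lemma s5_bounds : (2.23 < s5 < 2.24)%R.
Proof. pose proof s5_sq. pose proof (sqrt_pos 5). fold s5 in *. nra. Qed.

Lemma IZR_ne_odd_mul_s5 z A : Z.Odd z -> IZR A <> (IZR z * s5)%R.
Proof.
  intros [t ->] HA.
  assert (Hsq : A * A = 5 * (2*t+1) * (2*t+1)).
  { apply eq_IZR. rewrite !mult_IZR, HA. pose proof s5_sq.
    replace (IZR 5) with (s5 * s5)%R by auto. ring. }
  destruct (Z.Even_or_Odd A) as [[b ->]|[b ->]]; [lia|].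
  destruct (Z.Even_or_Odd b) as [[c ->]|[c ->]];
    destruct (Z.Even_or_Odd t) as [[u ->]|[u ->]]; nia.
Qed.

Lemma sq_lt_sq_of_norm_products (e x d y w c : R) :
  (0 < x -> 16 < y -> e * x = 4 * w -> 25 <= w * w -> d * y = 8 * c -> c * c = 1 ->
  x - e <= 2 * y - d - 4 -> d * d < e * e)%R.
Proof.
  intros Hx Hy Hex Hw Hdy Hc Hxy.
  destruct (Rlt_or_le (d * d) (e * e)) as [|Hed]; [assumption|exfalso].
  assert (Hdy2 : ((d * y) * (d * y) = 64)%R) by (rewrite Hdy; nra).
  assert (Hd : (d * d < 1 / 4)%R) by nra.
  assert (He : (-1/2 < e < 1/2)%R) by nra.
  assert (Hx2 : (x < 2 * y)%R) by nra.
  assert (Hex2 : ((e * x) * (e * x) >= 400)%R) by (rewrite Hex; nra).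
  assert ((e * e * (x * x) <= d * d * (x * x))%R) by (apply Rmult_le_compat_r; nra).
  nra.
Qed.

Section Mirror.

Variable j : nat.
Hypothesis Hj : (5 <= j)%nat.

Let F : Z := fz (S j).
Let L : Z := 2 * fz j + fz (S j).
(* L/F = L_(j+1)/F_(j+1) approximates sqrt 5 with error d/2.  The mirror
   (z, A) |-> (2F - z, 2L - A) turns the error e = A - z sqrt 5 into d - e, so it moves A/z to
   the other side of sqrt 5 unless e and d have the same sign and |e| <= |d|, which
   mirror_gap rules out. *)
Let d : R := (2 * (IZR L - IZR F * s5))%R.

Lemma mirror_gap z q : Z.Odd z -> 2 * fz j - 1 <= z <= 2 * F - 1 ->
  (0 < (IZR (z + 4*q) - IZR z * s5) * d ->
   d * d < (IZR (z + 4*q) - IZR z * s5) * (IZR (z + 4*q) - IZR z * s5))%R.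
Proof.
  intros Hodd Hz Hsign. pose proof s5_bounds. pose proof s5_sq.
  set (e := (IZR (z + 4*q) - IZR z * s5)%R) in *.
  assert (HF : 8 <= F).
  { pose proof (fib_monotone 6 (S j) ltac:(lia)) as H6. change (fib 6) with 8%nat in H6.
    unfold F, fz. lia. }
  assert (Hz1 : 1 <= z) by (unfold fz in *; pose proof (fib_pos j ltac:(lia)); lia).
  assert (HFr : (8 <= IZR F)%R) by (apply IZR_le; lia).
  assert (HLr : (0 <= IZR L)%R) by (apply IZR_le; unfold L, fz; lia).
  assert (Hzr : (1 <= IZR z <= 2 * IZR F - 1)%R).
  { split; [apply IZR_le; lia|].
    replace (2 * IZR F - 1)%R with (IZR (2 * F - 1))
      by (rewrite minus_IZR, mult_IZR; reflexivity).
    apply IZR_le. lia. }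
  set (c := IZR (cassini (S j))).
  assert (Hc : (c * c = 1)%R) by (unfold c; rewrite <- mult_IZR, cassini_sq; reflexivity).
  set (y := (IZR L + IZR F * s5)%R).
  assert (Hdy : (d * y = 8 * c)%R).
  { assert (HLF : (IZR L * IZR L - 5 * IZR F * IZR F = 4 * c)%R).
    { pose proof (lucas_norm j) as E. fold F L in E. apply (f_equal IZR) in E.
      rewrite minus_IZR, !mult_IZR in E. exact E. }
    unfold d, y. replace (8 * c)%R with (2 * (4 * c))%R by ring.
    rewrite <- HLF, <- H0. ring. }
  assert (Hy : (16 < y)%R) by (unfold y; nra).
  assert (Hd : (d * d < 1 / 4)%R).
  { assert ((d * y) * (d * y) = 64)%R by (rewrite Hdy; nra). nra. }
  destruct (Z.le_gt_cases (z + 4*q) 0) as [HA|HA].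
  - apply IZR_le in HA.
    assert (He : (e < -2)%R) by (unfold e; nra).
    nra.
  - destruct (odd_norm_classes z q Hodd) as (w & Hnorm & Hw).
    set (x := (IZR (z + 4*q) + IZR z * s5)%R).
    assert (Hx : (0 < x)%R) by (apply IZR_lt in HA; unfold x; nra).
    assert (Hex : (e * x = 4 * IZR w)%R).
    { unfold e, x. rewrite <- mult_IZR, <- Hnorm, minus_IZR, !mult_IZR, <- H0. ring. }
    destruct Hw as [Hw|Hw].
    + pose proof (unit_norm_sign j z q w Hj Hz HA Hnorm Hw) as Hwc.
      apply (f_equal IZR) in Hwc. rewrite opp_IZR in Hwc. fold c in Hwc.
      assert ((e * d) * (x * y) = -32)%R by (rewrite Hwc in Hex; nra).
      assert (0 < (e * d) * (x * y))%R by (apply Rmult_lt_0_compat; nra).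
      lra.
    + apply (sq_lt_sq_of_norm_products e x d y (IZR w) c); try assumption.
      * rewrite <- mult_IZR. apply IZR_le. exact Hw.
      * unfold x, e, y, d. nra.
Qed.

Lemma mirror_below z q : Z.Odd z -> 2 * fz j - 1 <= z <= 2 * F - 1 ->
  (IZR (z + 4*q) < IZR z * s5 <-> IZR (2*F - z) * s5 < IZR (2*L - (z + 4*q)))%R.
Proof.
  intros Hodd Hz. pose proof (mirror_gap z q Hodd Hz) as Hgap.
  pose proof (IZR_ne_odd_mul_s5 z (z + 4*q) Hodd) as Hirr.
  set (e := (IZR (z + 4*q) - IZR z * s5)%R) in *.
  assert (Hmirror : (IZR (2*L - (z + 4*q)) - IZR (2*F - z) * s5 = d - e)%R)
    by (unfold d, e; rewrite !minus_IZR, !mult_IZR; ring).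
  split; intros H.
  - assert (He : (e < 0)%R) by (unfold e; lra).
    enough (0 < d - e)%R by lra.
    destruct (Rle_or_lt 0 d); [lra|].
    assert (Hed : (d * d < e * e)%R) by (apply Hgap; nra). nra.
  - assert (Hde : (0 < d - e)%R) by lra.
    enough (e < 0)%R by (unfold e in *; lra).
    destruct (Rtotal_order e 0) as [|[He|He]]; [assumption|unfold e in He; lra|exfalso].
    assert (Hed : (d * d < e * e)%R) by (apply Hgap; nra). nra.
Qed.

Lemma mirror_above z q : Z.Odd z -> 2 * fz j - 1 <= z <= 2 * F - 1 ->
  (IZR z * s5 < IZR (z + 4*q) <-> IZR (2*L - (z + 4*q)) < IZR (2*F - z) * s5)%R.
Proof.
  intros Hodd Hz. pose proof (mirror_gap z q Hodd Hz) as Hgap.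
  pose proof (IZR_ne_odd_mul_s5 z (z + 4*q) Hodd) as Hirr.
  set (e := (IZR (z + 4*q) - IZR z * s5)%R) in *.
  assert (Hmirror : (IZR (2*L - (z + 4*q)) - IZR (2*F - z) * s5 = d - e)%R)
    by (unfold d, e; rewrite !minus_IZR, !mult_IZR; ring).
  split; intros H.
  - assert (He : (0 < e)%R) by (unfold e; lra).
    enough (d - e < 0)%R by lra.
    destruct (Rle_or_lt d 0); [lra|].
    assert (Hed : (d * d < e * e)%R) by (apply Hgap; nra). nra.
  - assert (Hde : (d - e < 0)%R) by lra.
    enough (0 < e)%R by (unfold e in *; lra).
    destruct (Rtotal_order e 0) as [He|[He|He]]; [exfalso|unfold e in He; lra|assumption].
    assert (Hed : (d * d < e * e)%R) by (apply Hgap; nra). nra.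
Qed.

End Mirror.

(* m = round(k phi): since (sqrt 5 - 1)/4 = 1/(2 phi), the inequalities say
   (m - 1/2)/phi < k < (m + 1/2)/phi. *)
Definition phi_round (m : Z) : Prop := exists k : Z,
  (IZR (2*m - 1) * s5 < IZR (2*m - 1 + 4*k) /\ IZR (2*m + 1 + 4*k) < IZR (2*m + 1) * s5)%R.

Lemma phi_round_reflect j M : (5 <= j)%nat -> fz j <= M < fz (S j) ->
  phi_round M <-> phi_round (fz (S j) - M).
Proof.
  intros Hj HM.
  assert (Hlo : Z.Odd (2*M - 1)) by (exists (M - 1); ring).
  assert (Hhi : Z.Odd (2*M + 1)) by (exists M; ring).
  pose proof (mirror_below j Hj (2*M + 1)) as Hbelow.
  pose proof (mirror_above j Hj (2*M - 1)) as Habove.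
  set (F := fz (S j)) in *. set (L := 2 * fz j + F) in *.
  assert (Hshift : forall k,
    2 * (F - M) + 1 = 2*F - (2*M - 1) /\ 2 * (F - M) - 1 = 2*F - (2*M + 1) /\
    2 * (F - M) + 1 + 4 * (fz j - k) = 2*L - (2*M - 1 + 4*k) /\
    2 * (F - M) - 1 + 4 * (fz j - k) = 2*L - (2*M + 1 + 4*k))
    by (intros; unfold L; repeat split; ring).
  split.
  - intros [k [H1 H2]]. exists (fz j - k).
    destruct (Hshift k) as (E1 & E2 & E3 & E4). rewrite E3, E4, E1, E2.
    split; [apply (Hbelow k)|apply (Habove k)]; auto; lia.
  - intros [k [H1 H2]]. exists (fz j - k).
    destruct (Hshift (fz j - k)) as (E1 & E2 & E3 & E4).
    replace (fz j - (fz j - k)) with k in * by ring.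
    rewrite E3, E1 in H2. rewrite E4, E2 in H1.
    split; [apply (Habove (fz j - k))|apply (Hbelow (fz j - k))]; auto; lia.
Qed.

Lemma not_phi_round_small m : 0 <= m < 5 -> ~ phi_round m <-> m = 1 \/ m = 4.
Proof.
  intros Hm. pose proof s5_bounds. unfold phi_round.
  assert (Hcases : m = 0 \/ m = 1 \/ m = 2 \/ m = 3 \/ m = 4) by lia.
  destruct Hcases as [-> | [-> | [-> | [-> | ->]]]]; split; try lia;
    try (intros _ [k [H1 H2]]; rewrite ?plus_IZR, ?minus_IZR, ?mult_IZR in H1;
         rewrite ?plus_IZR, ?mult_IZR in H2).
  - intros Hnot. exfalso. apply Hnot. exists 0. cbn. lra.
  - assert (0 < k) by (apply lt_IZR; lra). assert (k < 1) by (apply lt_IZR; lra). lia.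
  - intros Hnot. exfalso. apply Hnot. exists 1. cbn. lra.
  - intros Hnot. exfalso. apply Hnot. exists 2. cbn. lra.
  - assert (2 < k) by (apply lt_IZR; lra). assert (k < 3) by (apply lt_IZR; lra). lia.
Qed.

Lemma is_floor_phi_half_iff (m k : nat) : is_floor_phi_half m k <->
  (IZR (2 * Z.of_nat m - 1) * s5 < IZR (2 * Z.of_nat m - 1 + 4 * Z.of_nat k) /\
   IZR (2 * Z.of_nat m + 1 + 4 * Z.of_nat k) < IZR (2 * Z.of_nat m + 1) * s5)%R.
Proof.
  pose proof s5_sq. pose proof s5_bounds.
  assert (Hirr : IZR (2 * Z.of_nat m - 1 + 4 * Z.of_nat k) <> (IZR (2 * Z.of_nat m - 1) * s5)%R)
    by (apply IZR_ne_odd_mul_s5; exists (Z.of_nat m - 1); ring).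
  unfold is_floor_phi_half, phi. fold s5. rewrite !INR_IZR_INZ.
  rewrite !plus_IZR, !minus_IZR, !mult_IZR in *.
  set (M := IZR (Z.of_nat m)) in *. set (K := IZR (Z.of_nat k)) in *.
  assert (Hkey : (K * (1 + s5) * (s5 - 1) = 4 * K)%R)
    by (transitivity (K * (s5 * s5 - 1))%R; [ring|rewrite H; ring]).
  split.
  - intros [H1 H2]. split.
    + assert (Hle : ((2 * M - 1) * (s5 - 1) <= K * (1 + s5) * (s5 - 1))%R)
        by (apply Rmult_le_compat_r; lra).
      destruct (Rle_lt_or_eq_dec ((2 * M - 1) * s5) (2 * M - 1 + 4 * K)) as [|Heq];
        [lra|assumption|].
      exfalso. exact (Hirr (eq_sym Heq)).
    + assert (Hlt : (K * (1 + s5) * (s5 - 1) < (2 * M + 1) * (s5 - 1))%R)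
        by (apply Rmult_lt_compat_r; lra).
      lra.
  - intros [H1 H2]. split.
    + destruct (Rle_or_lt M ((1 + s5) / 2 * K + / 2)) as [|Hgt]; [assumption|exfalso].
      assert (K * (1 + s5) * (s5 - 1) <= (2 * M - 1) * (s5 - 1))%R
        by (apply Rmult_le_compat_r; lra).
      lra.
    + destruct (Rlt_or_le ((1 + s5) / 2 * K + / 2) (M + 1)) as [|Hge]; [assumption|exfalso].
      assert ((2 * M + 1) * (s5 - 1) <= K * (1 + s5) * (s5 - 1))%R
        by (apply Rmult_le_compat_r; lra).
      lra.
Qed.

Lemma exists_floor_phi_half_iff m :
  (exists k : nat, is_floor_phi_half m k) <-> phi_round (Z.of_nat m).
Proof.
  split.
  - intros [k Hk]. exists (Z.of_nat k). apply is_floor_phi_half_iff, Hk.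
  - intros [k [H1 H2]]. pose proof s5_bounds.
    assert (Hk : 0 <= k).
    { rewrite !plus_IZR, !minus_IZR, !mult_IZR in *.
      assert (0 <= IZR (Z.of_nat m))%R by (apply IZR_le; lia).
      assert (-1 < k) by (apply lt_IZR; nra). lia. }
    exists (Z.to_nat k). apply is_floor_phi_half_iff. rewrite Z2Nat.id by assumption. auto.
Qed.

Close Scope Z_scope.

Lemma occurs_exactly_twice_iff_not_phi_round m :
  occurs_exactly_twice m <-> ~ phi_round (Z.of_nat m).
Proof.
  induction m as [m IH] using lt_wf_ind.
  destruct (lt_dec m 5) as [Hm|Hm].
  { rewrite occurs_exactly_twice_small, not_phi_round_small by lia. lia. }
  destruct (jidx_spec (S m)) as [_ Hb]; [lia|]. set (j := jidx (S m)) in *.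
  assert (Hj : (5 <= j)%nat)
    by (apply Nat.lt_succ_r, lt_of_fib_lt; change (fib 5) with 5%nat; lia).
  assert (Hm' : (fib j <= m < fib (S j))%nat) by lia.
  rewrite (occurs_exactly_twice_reflect j m Hj Hm'),
    (phi_round_reflect j (Z.of_nat m) Hj ltac:(unfold fz; lia)).
  replace (fz (S j) - Z.of_nat m)%Z with (Z.of_nat (fib (S j) - m)) by (unfold fz; lia).
  apply IH. destruct j as [|j]; [lia|].
  pose proof (fib_lt_succ j ltac:(lia)). rewrite fib_SS in *. lia.
Qed.

Theorem proposition3 :
  forall m : nat,
    occurs_exactly_twice m <-> ~ (exists k : nat, is_floor_phi_half m k).
Proof.
  intros m. rewrite exists_floor_phi_half_iff. apply occurs_exactly_twice_iff_not_phi_round.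
Qed.
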